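(* Impose (A1)–(A6) and (A8') and fix $x\in\mathcal X$, $u\in[0,1]$. Then $\underline\Lambda(x,u)\le\Delta^{OO}_{Y^*}(x,u)\le\overline\Lambda(x,u)$, where (all functions at $(x,u)$): (i) under (A7.1): $\underline\Lambda=\frac{m_1^Y}{m_1^S}-\frac{m_0^Y-\underline y^*(-\Delta_S)}{m_1^S}$ and $\overline\Lambda=\frac{m_1^Y}{m_1^S}-\underline y^*$; (ii) under (A7.2): $\underline\Lambda=\frac{m_1^Y}{m_1^S}-\overline y^*$ and $\overline\Lambda=\frac{m_1^Y}{m_1^S}-\frac{m_0^Y-\overline y^*(-\Delta_S)}{m_1^S}$; (iii) under (A7.3) (sub-case (a) or (b)): $\underline\Lambda=\frac{m_1^Y}{m_1^S}-\min\left\{\frac{m_0^Y-\underline y^*(-\Delta_S)}{m_1^S},\overline y^*\right\}$ and $\overline\Lambda=\frac{m_1^Y}{m_1^S}-\max\left\{\frac{m_0^Y-\overline y^*(-\Delta_S)}{m_1^S},\underline y^*\right\}$.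
   Context: Standing setup. On a common probability space: $X$ (covariates, support $\mathcal X$), $Z$ (instrument, support $\mathcal Z$), $W=(X,Z)$; latent real random variables $U,V$, jointly continuously distributed conditional on $X$, with $U\mid X$ and $V\mid X$ each Uniform$[0,1]$ (their joint dependence unrestricted); real potential outcomes of interest $Y_0^*,Y_1^*$. Given functions $P:\mathcal X\times\mathcal Z\to[0,1]$ and $Q:\{0,1\}\times\mathcal X\to[0,1]$, define the treatment $D=\mathbf 1\{P(W)\ge U\}$, potential selection indicators $S_d=\mathbf 1\{Q(d,X)\ge V\}$ ($d\in\{0,1\}$), selection indicator $S=DS_1+(1-D)S_0$, potential observable outcomes $Y_d=S_dY_d^*$ and observable outcome $Y=DY_1+(1-D)Y_0$. For $x\in\mathcal X$, $u\in[0,1]$, $d\in\{0,1\}$: $m_d^Y(x,u)=\mathbb E[Y_d\mid X=x,U=u]$, $m_d^S(x,u)=\mathbb E[S_d\mid X=x,U=u]$, $\Delta_S(x,u)=m_1^S(x,u)-m_0^S(x,u)$, and $\Delta^{OO}_{Y^*}(x,u)=\mathbb E[Y_1^*-Y_0^*\mid X=x,U=u,S_0=1,S_1=1]$. Ratios appearing are assumed well defined (nonzero denominators). Assumptions: (A1) $Z$ is independent of $(U,V,Y_0^*,Y_1^* )$ conditional on $X$; (A2) the distribution of $P(W)$ given $X$ is nondegenerate; (A3) $\mathbb E|Y_d^*|<\infty$ and $\mathbb E[(Y_d^* )^2]<\infty$; (A4) $0<\mathbb P[D=1\mid X]<1$; (A5) $X$ is invariant to counterfactual manipulation of treatment; (A6)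 $Y_0^*,Y_1^*$ have a common support $\mathcal Y^*\subseteq\mathbb R$; $\underline y^*=\inf\mathcal Y^*$, $\overline y^*=\sup\mathcal Y^*$ (possibly infinite), known. Support cases: (A7.1) $\underline y^*>-\infty$, $\overline y^*=+\infty$, $\mathcal Y^*$ an interval; (A7.2) $\underline y^*=-\infty$, $\overline y^*<\infty$, $\mathcal Y^*$ an interval; (A7.3) both finite and either (a) $\mathcal Y^*$ an interval or (b) $\underline y^*,\overline y^*\in\mathcal Y^*$. (A8') (negative effect on selection) $Q(0,x)>Q(1,x)>0$ for all $x\in\mathcal X$. *)

From HB Require Import structures.
From mathcomp Require Import all_boot all_order all_algebra.
From mathcomp Require Import all_classical all_reals all_analysis.
From mathcomp Require Import measurable_realfun.
Set Implicit Arguments. Unset Strict Implicit. Unset Printing Implicit Defensive.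
Import Order.TTheory GRing.Theory Num.Theory.
Local Open Scope classical_set_scope.
Local Open Scope ring_scope.

Section Defs.
Context {R : realType} {dO dX : measure_display}
  {Omega : measurableType dO} {TX : measurableType dX}.

(* [k] is a regular conditional probability of [P] given [(X, U)]:
   k x u is (a version of) the conditional law of the sample point given
   X = x, U = u. *)
Definition is_cond_law (P : probability Omega R) (X : Omega -> TX)
    (U : Omega -> R) (k : TX -> R -> probability Omega R) : Prop :=
  (forall A : set Omega, measurable A ->
     measurable_fun [set: TX * R]
       ((fun xu : TX * R => k xu.1 xu.2 A) : TX * R -> \bar R)) /\
  (forall (A : set Omega) (B : set (TX * R)), measurable A -> measurable B ->
     P (A `&` ((fun w => (X w, U w)) @^-1` B)) =
     (\int[P]_(w in (fun w => (X w, U w)) @^-1` B) k (X w) (U w) A)%E).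

Definition Ex (mu : probability Omega R) (f : Omega -> R) : R :=
  fine (\int[mu]_w (f w)%:E).

(* indicator of the event {Q(d,x) >= V} : the potential selection S_d *)
Definition Sel (Q : bool -> TX -> R) (V : Omega -> R) (d : bool) (x : TX)
  : Omega -> R := fun w => ((V w <= Q d x)%R)%:R.

Definition Ystar (Y0s Y1s : Omega -> R) (d : bool) : Omega -> R :=
  if d then Y1s else Y0s.

Definition mY (k : TX -> R -> probability Omega R) Q V Y0s Y1s d x (u : R) : R :=
  Ex (k x u) (fun w => Sel Q V d x w * Ystar Y0s Y1s d w).

Definition mS (k : TX -> R -> probability Omega R) Q V d x (u : R) : R :=
  Ex (k x u) (Sel Q V d x).

Definition DeltaS k Q V x (u : R) : R := mS k Q V true x u - mS k Q V false x u.

(* Delta^OO_{Y*}(x,u) = E[Y1* - Y0* | X = x, U = u, S0 = 1, S1 = 1] *)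
Definition DeltaOO k Q V (Y0s Y1s : Omega -> R) x (u : R) : R :=
  Ex (k x u) (fun w => Sel Q V false x w * Sel Q V true x w * (Y1s w - Y0s w))
  / Ex (k x u) (fun w => Sel Q V false x w * Sel Q V true x w).

End Defs.

From HB Require Import structures.
From mathcomp Require Import all_boot all_order all_algebra.
From mathcomp Require Import all_classical all_reals all_analysis.
From mathcomp Require Import measurable_realfun.
Import Order.TTheory GRing.Theory Num.Theory.
Local Open Scope classical_set_scope.
Local Open Scope ring_scope.

(* Under (A8') the selection events are nested, {S_1 = 1} ⊆ {S_0 = 1}, so
   S_0 S_1 = S_1 and Delta^OO = m_1^Y/m_1^S - E[S_1 Y_0^*]/E[S_1].  The only
   unknown is the mean of Y_0^* over the always-selected, i.e. over a subpopulation
   of mass E[S_1] inside the observed population {S_0 = 1} of mass E[S_0].  It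
   lies between the support bounds, and trimming the remaining mass
   E[S_0] - E[S_1] = -Delta_S at the support bound gives the Lee-type bounds
   (m_0^Y - y (-Delta_S)) / m_1^S. *)

Section weighted_integrals.
Context {R : realType} {d : measure_display} {T : measurableType d}.
Variable mu : {finite_measure set T -> \bar R}.

Local Notation I f := (\int[mu]_w f w).

Definition bounded_mfun (s : T -> R) :=
  measurable_fun [set: T] s /\ [bounded s w | w in [set: T]].

Lemma bounded_mfun_integrable {s} :
  bounded_mfun s -> mu.-integrable [set: T] (EFin \o s).
Proof.
move=> [ms bs]; apply: measurable_bounded_integrable => //.
exact/fin_num_fun_lty/fin_num_measure.
Qed.

Lemma integrable_bounded_mfunM {s y} : bounded_mfun s ->
  mu.-integrable [set: T] (EFin \o y) ->
  mu.-integrable [set: T] (EFin \o (fun w => s w * y w)).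
Proof.
by move=> [ms bs] iy; apply: eq_integrable (integrableMr measurableT ms bs iy).
Qed.

Section weights.
Variables (g y : T -> R).
Hypotheses (ig : mu.-integrable [set: T] (EFin \o g))
  (igy : mu.-integrable [set: T] (EFin \o (fun w => g w * y w))).
Hypothesis g_ge0 : forall w, 0 <= g w.

Let igZ a : mu.-integrable [set: T] (EFin \o (fun w => a * g w)).
Proof. exact: eq_integrable (integrableZl measurableT a ig). Qed.

Lemma Rintegral_weight_ge a : (forall w, a <= y w) -> a * I g <= I (fun w => g w * y w).
Proof.
move=> ay; rewrite -RintegralZl //; apply: le_Rintegral => // w _.
by rewrite mulrC ler_wpM2l.
Qed.

Lemma Rintegral_weight_le b : (forall w, y w <= b) -> I (fun w => g w * y w) <= b * I g.
Proof.
move=> yb; rewrite -RintegralZl //; apply: le_Rintegral => // w _.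
by rewrite [g w * _]mulrC ler_wpM2r.
Qed.

End weights.

Section nested_weights.
Variables (s0 s1 y : T -> R).
Hypotheses (is0 : mu.-integrable [set: T] (EFin \o s0))
  (is1 : mu.-integrable [set: T] (EFin \o s1))
  (is0y : mu.-integrable [set: T] (EFin \o (fun w => s0 w * y w)))
  (is1y : mu.-integrable [set: T] (EFin \o (fun w => s1 w * y w))).
Hypotheses (s1_ge0 : forall w, 0 <= s1 w) (s1_le_s0 : forall w, s1 w <= s0 w).
Hypothesis Is1_gt0 : 0 < I s1.

Let c := I (fun w => s1 w * y w) / I s1.

Let trimmed (a : R) := (I (fun w => s0 w * y w) - a * (I s0 - I s1)) / I s1.

Let is01 : mu.-integrable [set: T] (EFin \o (s0 \- s1)).
Proof. exact: eq_integrable (integrableB measurableT is0 is1). Qed.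

Let is01y : mu.-integrable [set: T] (EFin \o (fun w => (s0 \- s1) w * y w)).
Proof.
apply: eq_integrable (integrableB measurableT is0y is1y) => //.
by move=> w _ /=; rewrite -EFinB mulrBl.
Qed.

Let s01_ge0 w : 0 <= (s0 \- s1) w. Proof. by rewrite subr_ge0. Qed.

Let Rintegral_s01 : I (s0 \- s1) = I s0 - I s1.
Proof. exact: RintegralB. Qed.

Let Rintegral_s01y :
  I (fun w => (s0 \- s1) w * y w) = I (fun w => s0 w * y w) - I (fun w => s1 w * y w).
Proof. by rewrite -RintegralB //; apply: eq_Rintegral => w _; rewrite /= mulrBl. Qed.

Lemma cond_mean_lbound a : (forall w, a <= y w) -> a <= c <= trimmed a.
Proof.
move=> ay; apply/andP; split.
  by rewrite ler_pdivlMr //; exact: Rintegral_weight_ge.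
rewrite ler_pM2r ?invr_gt0 // lerBrDl -lerBrDr -Rintegral_s01y -Rintegral_s01.
exact: Rintegral_weight_ge.
Qed.

Lemma cond_mean_ubound b : (forall w, y w <= b) -> trimmed b <= c <= b.
Proof.
move=> yb; apply/andP; split; last first.
  by rewrite ler_pdivrMr //; exact: Rintegral_weight_le.
rewrite ler_pM2r ?invr_gt0 // lerBlDl -lerBlDr -Rintegral_s01y -Rintegral_s01.
exact: Rintegral_weight_le.
Qed.

End nested_weights.
End weighted_integrals.

Section selection.
Context {R : realType} {dO dX : measure_display}
  {Omega : measurableType dO} {TX : measurableType dX}.
Variables (Q : bool -> TX -> R) (V : Omega -> R) (x : TX).

Lemma Sel_ge0 d w : 0 <= Sel Q V d x w.
Proof. by rewrite /Sel; case: (V w <= Q d x). Qed.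

Lemma Sel_bounded_mfun d :
  measurable_fun [set: Omega] V -> bounded_mfun (Sel Q V d x).
Proof.
move=> mV; split.
  have -> : Sel Q V d x = \1_(V @^-1` `]-oo, Q d x]).
    apply/funext => w; rewrite indicE /Sel; congr (_%:R); congr nat_of_bool.
    apply/idP/idP => [h|/set_mem]; last by rewrite /= in_itv.
    by apply/mem_set; rewrite /= in_itv /= h.
  apply: measurable_indic.
  by rewrite -[X in measurable X]setTI; apply: mV => //; exact: measurable_itv.
exists 1; split => // M M1 w _ /=.
by rewrite /Sel; case: (V w <= Q d x); rewrite ?normr0 ?normr1 ltW // (lt_trans _ M1).
Qed.

Hypothesis Q_nested : Q true x <= Q false x.

Lemma Sel_true_le_false w : Sel Q V true x w <= Sel Q V false x w.
Proof.
rewrite /Sel; have [h|] := boolP (V w <= Q true x); last by rewrite Sel_ge0.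
by rewrite (le_trans h Q_nested).
Qed.

Lemma Sel_falseM_true w : Sel Q V false x w * Sel Q V true x w = Sel Q V true x w.
Proof.
rewrite /Sel; have [h|] := boolP (V w <= Q true x); last by rewrite mulr0.
by rewrite (le_trans h Q_nested) mulr1.
Qed.

Lemma DeltaOO_nested (k : TX -> R -> probability Omega R) (Y0s Y1s : Omega -> R) u :
  measurable_fun [set: Omega] V ->
  (k x u).-integrable [set: Omega] (EFin \o Y0s) ->
  (k x u).-integrable [set: Omega] (EFin \o Y1s) ->
  DeltaOO k Q V Y0s Y1s x u = mY k Q V Y0s Y1s true x u / mS k Q V true x u
    - Ex (k x u) (fun w => Sel Q V true x w * Y0s w) / mS k Q V true x u.
Proof.
move=> mV iY0 iY1; have b1 := Sel_bounded_mfun true mV.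
rewrite /DeltaOO /mY /mS /Ex -mulrBl; congr (_ / _).
  rewrite -RintegralB //; try exact: integrable_bounded_mfunM.
  by apply: eq_Rintegral => w _; rewrite Sel_falseM_true mulrBr.
by congr fine; apply: eq_integral => w _; rewrite Sel_falseM_true.
Qed.

End selection.

Theorem corollaryC1 (R : realType) (dO dX : measure_display)
  (Omega : measurableType dO) (TX : measurableType dX)
  (P : probability Omega R) (X : Omega -> TX) (U V Y0s Y1s : Omega -> R)
  (k : TX -> R -> probability Omega R) (Q : bool -> TX -> R)
  (YS : set R) (x : TX) (u : R) :
  measurable_fun [set: Omega] X -> measurable_fun [set: Omega] U ->
  measurable_fun [set: Omega] V ->
  measurable_fun [set: Omega] Y0s -> measurable_fun [set: Omega] Y1s ->
  is_cond_law P X U k ->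
  (* (A3) *)
  P.-integrable [set: Omega] (EFin \o Y0s) ->
  P.-integrable [set: Omega] (EFin \o Y1s) ->
  P.-integrable [set: Omega] (EFin \o (fun w => Y0s w ^+ 2)) ->
  P.-integrable [set: Omega] (EFin \o (fun w => Y1s w ^+ 2)) ->
  (* the conditional expectations at (x,u) exist *)
  (k x u).-integrable [set: Omega] (EFin \o Y0s) ->
  (k x u).-integrable [set: Omega] (EFin \o Y1s) ->
  (* (A6) common support YS *)
  (forall w, YS (Y0s w) /\ YS (Y1s w)) ->
  (* (A8') *)
  (forall x', 0 < Q true x' < Q false x') ->
  (forall d x', 0 <= Q d x' <= 1) ->
  0 <= u <= 1 ->
  (* ratios well defined *)
  mS k Q V true x u != 0 ->
  Ex (k x u) (fun w => Sel Q V false x w * Sel Q V true x w) != 0 ->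
  let r := mY k Q V Y0s Y1s true x u / mS k Q V true x u in
  let m0Y := mY k Q V Y0s Y1s false x u in
  let m1S := mS k Q V true x u in
  let dS := DeltaS k Q V x u in
  let D := DeltaOO k Q V Y0s Y1s x u in
  let ylo := inf YS in
  let yhi := sup YS in
  (* (i) (A7.1) *)
  (has_lbound YS -> ~ has_ubound YS -> is_interval YS ->
     r - (m0Y - ylo * (- dS)) / m1S <= D <= r - ylo) /\
  (* (ii) (A7.2) *)
  (~ has_lbound YS -> has_ubound YS -> is_interval YS ->
     r - yhi <= D <= r - (m0Y - yhi * (- dS)) / m1S) /\
  (* (iii) (A7.3) *)
  (has_lbound YS -> has_ubound YS ->
     (is_interval YS \/ (YS ylo /\ YS yhi)) ->
     r - Num.min ((m0Y - ylo * (- dS)) / m1S) yhi <= D <=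
     r - Num.max ((m0Y - yhi * (- dS)) / m1S) ylo).
Proof.
move=> _ _ mV _ _ _ _ _ _ _ iY0 iY1 YS_Y hQ _ _ m1S_neq0 _ r m0Y m1S dS D ylo yhi.
have Q_nested : Q true x <= Q false x by case/andP: (hQ x) => _ /ltW.
pose s0 := Sel Q V false x; pose s1 := Sel Q V true x.
have b0 : bounded_mfun s0 by exact: Sel_bounded_mfun.
have b1 : bounded_mfun s1 by exact: Sel_bounded_mfun.
have m1S_gt0 : 0 < m1S.
  by rewrite lt0r m1S_neq0; apply: Rintegral_ge0 => w _; exact: Sel_ge0.
have is0 := bounded_mfun_integrable (k x u) b0.
have is1 := bounded_mfun_integrable (k x u) b1.
have is0y := integrable_bounded_mfunM (k x u) b0 iY0.
have is1y := integrable_bounded_mfunM (k x u) b1 iY0.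
have lbound := cond_mean_lbound (k x u) _ _ _ is0 is1 is0y is1y (Sel_ge0 Q V x true)
  (Sel_true_le_false Q V x Q_nested) m1S_gt0.
have ubound := cond_mean_ubound (k x u) _ _ _ is0 is1 is0y is1y (Sel_ge0 Q V x true)
  (Sel_true_le_false Q V x Q_nested) m1S_gt0.
have ylo_le hl w : ylo <= Y0s w := ge_inf hl (YS_Y w).1.
have le_yhi hh w : Y0s w <= yhi := ub_le_sup hh (YS_Y w).1.
have -> : D = r - Ex (k x u) (fun w => s1 w * Y0s w) / m1S by exact: DeltaOO_nested.
have -> : - dS = mS k Q V false x u - m1S by rewrite opprB.
split; [|split] => [hl _ _ | _ hh _ | hl hh _]; rewrite !lerD2l !lerN2.
- by have /andP[-> ->] := lbound _ (ylo_le hl).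
- by have /andP[-> ->] := ubound _ (le_yhi hh).
have /andP[ylo_c c_trim] := lbound _ (ylo_le hl).
have /andP[trim_c c_yhi] := ubound _ (le_yhi hh).
by rewrite le_min ge_max c_trim c_yhi trim_c ylo_c.
Qed.
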